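(* Let $r,a,b\in\mathbb{N}$ with $b\ge2$ and $a=b(b-1)$. Then for any $\varepsilon>0$ and any completely multiplicative functions $f_1,\ldots,f_r:\mathbb{N}\to\mathbb{S}^1$, the set $$\mathcal{A}_{a,b,a,b-1}(f_1,\ldots,f_r;\varepsilon):=\{n\in\mathbb{N}: |f_j(an+b)-f_j(an+b-1)|<\varepsilon \text{ for all } 1\le j\le r\}$$ has positive lower asymptotic density.
   Context: $\mathbb{N}=\{1,2,\dots\}$, $\mathbb{S}^1$ the unit circle; completely multiplicative means $f(mn)=f(m)f(n)$. The lower asymptotic density of $A\subseteq\mathbb{N}$ is $\underline{d}(A)=\liminf_{N\to\infty}|A\cap\{1,\dots,N\}|/N$. *)

From Stdlib Require Import Reals ClassicalEpsilon.
From Coquelicot Require Import Coquelicot.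
Open Scope R_scope.

Definition completely_multiplicative (f : nat -> C) : Prop :=
  forall m n : nat, (1 <= m)%nat -> (1 <= n)%nat -> f (m * n)%nat = Cmult (f m) (f n).

Definition unit_circle_valued (f : nat -> C) : Prop :=
  forall n : nat, (1 <= n)%nat -> Cmod (f n) = 1.

Definition indic (P : nat -> Prop) (n : nat) : R :=
  if excluded_middle_informative (P n) then 1 else 0.

Fixpoint count_upto (P : nat -> Prop) (N : nat) : R :=
  match N with
  | O => 0
  | S k => count_upto P k + indic P (S k)
  end.

Definition lower_density (P : nat -> Prop) : Rbar :=
  LimInf_seq (fun N => count_upto P N / INR N).

(* With [P = a s + b], [X = d P] and [Y = d (P - 1)], the integer [n = P Y k + s] satisfies
   [a n + b = P (a k Y + 1)] and [a n + b - 1 = (P - 1) (a k X + 1)], so for a completely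
   multiplicative unimodular [f]
     |f(a n + b) - f(a n + b - 1)| = |f(X) conj f(a k X + 1) - f(Y) conj f(a k Y + 1)|.
   Using [a = b (b - 1)], one builds [X_0, ..., X_K] such that every pair [X_i, X_j], [i < j],
   has this shape.  For each [k], the [K + 1] vectors [(f_j(X_i) conj f_j(a k X_i + 1))_j]
   contain two close ones once [K] is large (pigeonhole on the torus), so every [k >= 1]
   puts a term of one of finitely many arithmetic progressions [k |-> P X_j k + s] into the
   set, which therefore has positive lower density. *)

From Stdlib Require Import Reals Lra Lia ZArith Arith List ClassicalEpsilon.
From Coquelicot Require Import Coquelicot.

Lemma Nat_divide_fact x n : (1 <= x <= n)%nat -> Nat.divide x (fact n).
Proof.
  induction n as [|n IH]; intros Hx; [lia|].
  destruct (Nat.eq_dec x (S n)) as [->|Hne].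
  - exists (fact n). simpl. lia.
  - destruct IH as [q Hq]; [lia|]. exists (q * S n)%nat. simpl. rewrite Hq. lia.
Qed.

(* Starting from [c'_0 = (c_K)!], every difference of the new chain is a difference
   or an element of the old one, hence at most [c_K] and a divisor of [(c_K)!]. *)
Lemma exists_divisible_gap_chain K : exists c : nat -> nat,
  (forall i, 1 <= c i)%nat /\
  (forall i j, i < j <= K -> c i < c j /\ Nat.divide (c j - c i) (c i))%nat.
Proof.
  induction K as [|K [c [Hpos Hchain]]].
  - exists (fun _ => 1%nat). split; intros; lia.
  - assert (Hle : forall i, (i <= K -> c i <= c K)%nat).
    { intros i Hi. destruct (Nat.eq_dec i K) as [->|]; [lia|].
      destruct (Hchain i K) as [H _]; lia. }
    set (F := fact (c K)).
    assert (HF : (1 <= F)%nat) by (pose proof (lt_O_fact (c K)); unfold F; lia).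
    exists (fun i => match i with O => F | S i' => (F + c i')%nat end).
    split.
    + intros [|i]; [exact HF|lia].
    + intros [|i] [|j] Hij; try lia.
      * pose proof (Hpos j). split; [lia|].
        replace (F + c j - F)%nat with (c j) by lia.
        apply Nat_divide_fact. pose proof (Hle j). lia.
      * destruct (Hchain i j) as [Hlt Hdiv]; [lia|]. split; [lia|].
        replace (F + c j - (F + c i))%nat with (c j - c i)%nat by lia.
        apply Nat.divide_add_r; [|exact Hdiv].
        apply Nat_divide_fact. pose proof (Hle j). lia.
Qed.

Open Scope Z_scope.

Local Notation "x ^^ n" := (Zpower_nat x n) (at level 30, right associativity) : Z_scope.

Lemma Zpower_nat_ge1 x n : 1 <= x -> 1 <= x ^^ n.
Proof.
  intros Hx. induction n as [|n IH]; [simpl; lia|]. rewrite Zpower_nat_succ_r. nia.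
Qed.

Lemma Zpower_nat_lt_mono_l x y n : 0 <= x < y -> (1 <= n)%nat -> x ^^ n < y ^^ n.
Proof.
  intros Hxy Hn. rewrite !Zpower_nat_Z. apply Z.pow_lt_mono_l; lia.
Qed.

Lemma Zpower_nat_mul_r x m q : x ^^ (q * m) = (x ^^ m) ^^ q.
Proof.
  induction q as [|q IH]; [reflexivity|].
  rewrite Nat.mul_succ_l, Nat.add_comm, Zpower_nat_is_exp, IH, Zpower_nat_succ_r. ring.
Qed.

Lemma Zpower_nat_opp1_odd n : Nat.Odd n -> (-1) ^^ n = -1.
Proof.
  intros [c ->]. induction c as [|c IH]; [reflexivity|].
  replace (2 * S c + 1)%nat with (S (S (2 * c + 1))) by lia.
  rewrite !Zpower_nat_succ_r, IH. ring.
Qed.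

Lemma Zpower_nat_sub_divide x y n : (x - y | x ^^ n - y ^^ n).
Proof.
  induction n as [|n [q Hq]]; [exists 0; reflexivity|].
  exists (x * q + y ^^ n). rewrite !Zpower_nat_succ_r.
  replace (x * x ^^ n - y * y ^^ n) with (x * (x ^^ n - y ^^ n) + y ^^ n * (x - y)) by ring.
  rewrite Hq. ring.
Qed.

Lemma Zpower_nat_sub_divide_multiple x y m e : Nat.divide m e ->
  (x ^^ m - y ^^ m | x ^^ e - y ^^ e).
Proof.
  intros [q ->]. rewrite !Zpower_nat_mul_r. apply Zpower_nat_sub_divide.
Qed.

Lemma residue_of_divisible_shift b P : 2 <= b -> 0 < P -> (b | P) -> (b - 1 | P - 1) ->
  exists w, 0 <= w /\ P = b * (b - 1) * w + b.
Proof.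
  intros Hb HP [y ->] Hdiv.
  assert (Hy : (b - 1 | y - 1)).
  { apply (Z.divide_add_cancel_r (b - 1) ((b - 1) * y)); [apply Z.divide_factor_l|].
    replace ((b - 1) * y + (y - 1)) with (y * b - 1) by ring. exact Hdiv. }
  destruct Hy as [w Hw]. exists w. split; nia.
Qed.

Definition ratio_gap (b : Z) (L : nat) : Z := b ^^ L - (b - 1) ^^ L.

(* The division is exact: [b^L - (b-1)^L - 1] is a multiple of [b - 1]. *)
Definition ratio_unit (b : Z) (L C e : nat) : Z :=
  1 + ((ratio_gap b L - 1) / (b - 1)) ^^ C * b ^^ e * (b - 1) ^^ (C - e).

Definition ratio_term (b : Z) (L C e : nat) : Z :=
  (b - 1) ^^ e * b ^^ (C - e) * ratio_unit b L C e.

Section RatioTerms.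

Variables (b : Z) (L C : nat).
Hypotheses (Hb : 2 <= b) (HL : (1 <= L)%nat) (HC : Nat.Odd C).

Let G := ratio_gap b L.
Let z := ((G - 1) / (b - 1)) ^^ C.

Lemma ratio_unit_eq e : ratio_unit b L C e = 1 + z * b ^^ e * (b - 1) ^^ (C - e).
Proof. reflexivity. Qed.

Lemma ratio_unit_ge1 e : 1 <= ratio_unit b L C e.
Proof.
  rewrite ratio_unit_eq.
  assert (HG : 1 <= G).
  { pose proof (Zpower_nat_lt_mono_l (b - 1) b L ltac:(lia) HL). unfold G, ratio_gap. lia. }
  assert (Hq : 0 <= (G - 1) / (b - 1)) by (apply Z.div_pos; lia).
  pose proof (Zpower_NR0 _ C Hq). pose proof (Zpower_nat_ge1 b e ltac:(lia)).
  pose proof (Zpower_nat_ge1 (b - 1) (C - e) ltac:(lia)). nia.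
Qed.

(* [z (b-1)^C = (G - 1)^C] is [-1] modulo [G] because [C] is odd. *)
Lemma ratio_gap_divide_unit_twist : (G | 1 + z * (b - 1) ^^ C).
Proof.
  assert (Hk : (b - 1 | G - 1)).
  { replace (G - 1) with ((b ^^ L - 1 ^^ L) - (b - 1) ^^ L)
      by (unfold G, ratio_gap; rewrite (Zpower_nat_Z 1), Z.pow_1_l; lia).
    apply Z.divide_sub_r; [apply Zpower_nat_sub_divide|].
    destruct L as [|L']; [lia|]. rewrite Zpower_nat_succ_r. apply Z.divide_factor_l. }
  destruct Hk as [k Hk].
  assert (Hz : z * (b - 1) ^^ C = (G - 1) ^^ C).
  { unfold z. rewrite Hk, Z.div_mul by lia. rewrite !Zpower_nat_Z, Z.pow_mul_l. reflexivity. }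
  rewrite Hz. pose proof (Zpower_nat_sub_divide (G - 1) (-1) C) as H.
  rewrite Zpower_nat_opp1_odd in H by exact HC.
  replace (G - 1 - -1) with G in H by ring.
  replace (1 + (G - 1) ^^ C) with ((G - 1) ^^ C - -1) by ring. exact H.
Qed.

Lemma ratio_unit_divisible m e : Nat.divide m L -> Nat.divide m e -> (e <= C)%nat ->
  (b ^^ m - (b - 1) ^^ m | ratio_unit b L C e).
Proof.
  intros HmL Hme HeC.
  destruct (Zpower_nat_sub_divide_multiple b (b - 1) m e Hme) as [t Ht].
  assert (Hsplit : (b - 1) ^^ e * (b - 1) ^^ (C - e) = (b - 1) ^^ C).
  { rewrite <- Zpower_nat_is_exp. f_equal. lia. }
  rewrite ratio_unit_eq.
  replace (1 + z * b ^^ e * (b - 1) ^^ (C - e)) with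
    ((1 + z * (b - 1) ^^ C) + (b ^^ m - (b - 1) ^^ m) * (t * z * (b - 1) ^^ (C - e))).
  2:{ rewrite <- Hsplit. replace (b ^^ e) with ((b - 1) ^^ e + t * (b ^^ m - (b - 1) ^^ m)) by lia.
      ring. }
  apply Z.divide_add_r; [|apply Z.divide_factor_l].
  eapply Z.divide_trans; [|exact ratio_gap_divide_unit_twist].
  apply Zpower_nat_sub_divide_multiple, HmL.
Qed.

Lemma ratio_unit_shift e m : (e + m <= C)%nat ->
  b ^^ m * ratio_unit b L C e - (b - 1) ^^ m * ratio_unit b L C (e + m) = b ^^ m - (b - 1) ^^ m.
Proof.
  intros HeC. rewrite !ratio_unit_eq.
  replace (C - e)%nat with (m + (C - (e + m)))%nat by lia.
  rewrite !Zpower_nat_is_exp. ring.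
Qed.

Lemma ratio_term_ge1 e : 1 <= ratio_term b L C e.
Proof.
  unfold ratio_term. pose proof (ratio_unit_ge1 e).
  pose proof (Zpower_nat_ge1 (b - 1) e ltac:(lia)).
  pose proof (Zpower_nat_ge1 b (C - e) ltac:(lia)). nia.
Qed.

(* Writing [ratio_unit e = g p] and [ratio_unit (e + m) = g p'] with [g = b^m - (b-1)^m],
   the shift identity becomes [b^m p - (b-1)^m p' = 1], so [P := b^m p] is [0] mod [b]
   and [1] mod [b - 1]. *)
Lemma ratio_term_pair e m : (1 <= m)%nat -> Nat.divide m L -> Nat.divide m e -> (e + m <= C)%nat ->
  exists d w, 1 <= d /\ 0 <= w /\
    ratio_term b L C e = d * (b * (b - 1) * w + b) /\
    ratio_term b L C (e + m) = d * (b * (b - 1) * w + b - 1).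
Proof.
  intros Hm HmL Hme HC'.
  set (g := b ^^ m - (b - 1) ^^ m).
  assert (Hg : 1 <= g)
    by (pose proof (Zpower_nat_lt_mono_l (b - 1) b m ltac:(lia) Hm); unfold g; lia).
  destruct (ratio_unit_divisible m e HmL Hme ltac:(lia)) as [p Hp].
  destruct (ratio_unit_divisible m (e + m) HmL (Nat.divide_add_r _ _ _ Hme (Nat.divide_refl m))
              ltac:(lia)) as [p' Hp'].
  fold g in Hp, Hp'.
  assert (Hpp : b ^^ m * p - (b - 1) ^^ m * p' = 1).
  { pose proof (ratio_unit_shift e m HC') as Hs. fold g in Hs. rewrite Hp, Hp' in Hs.
    apply (Z.mul_reg_l _ _ g); [lia|]. rewrite <- Hs at 2. ring. }
  destruct m as [|m']; [lia|].
  assert (Hp0 : 0 < p) by (pose proof (ratio_unit_ge1 e); nia).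
  assert (Hbm : 1 <= b ^^ S m') by (apply Zpower_nat_ge1; lia).
  destruct (residue_of_divisible_shift b (b ^^ S m' * p) Hb ltac:(nia)) as [w [Hw HP]].
  { rewrite Zpower_nat_succ_r. exists (b ^^ m' * p). ring. }
  { replace (b ^^ S m' * p - 1) with ((b - 1) ^^ S m' * p') by lia.
    rewrite Zpower_nat_succ_r. exists ((b - 1) ^^ m' * p'). ring. }
  exists ((b - 1) ^^ e * b ^^ (C - (e + S m')) * g), w.
  pose proof (Zpower_nat_ge1 (b - 1) e ltac:(lia)).
  pose proof (Zpower_nat_ge1 b (C - (e + S m')) ltac:(lia)).
  split; [nia|]. split; [exact Hw|].
  unfold ratio_term. rewrite Hp, Hp'. split.
  - replace (C - e)%nat with (C - (e + S m') + S m')%nat by lia.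
    rewrite <- HP, Zpower_nat_is_exp. ring.
  - replace (b * (b - 1) * w + b - 1) with ((b - 1) ^^ S m' * p') by lia.
    rewrite Zpower_nat_is_exp. ring.
Qed.

End RatioTerms.

Lemma exists_ratio_sequence_Z (b : Z) (K : nat) : 2 <= b -> exists X : nat -> Z,
  (forall i, 1 <= X i) /\
  forall i j, (i < j <= K)%nat -> exists d w, 1 <= d /\ 0 <= w /\
    X i = d * (b * (b - 1) * w + b) /\ X j = d * (b * (b - 1) * w + b - 1).
Proof.
  intros Hb. destruct (exists_divisible_gap_chain K) as [c [Hpos Hchain]].
  set (L := fact (c K)). set (C := (2 * c K + 1)%nat).
  assert (HL : (1 <= L)%nat) by (pose proof (lt_O_fact (c K)); unfold L; lia).
  assert (HC : Nat.Odd C) by (exists (c K); reflexivity).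
  exists (fun i => ratio_term b L C (c i)). split.
  - intros i. apply ratio_term_ge1; assumption.
  - intros i j Hij. destruct (Hchain i j Hij) as [Hlt Hdiv].
    assert (HjK : (c j <= c K)%nat).
    { destruct (Nat.eq_dec j K) as [->|]; [lia|]. destruct (Hchain j K) as [H _]; lia. }
    replace (c j) with (c i + (c j - c i))%nat by lia.
    apply ratio_term_pair; try assumption; [lia| |lia].
    apply Nat_divide_fact. lia.
Qed.

Open Scope nat_scope.

Lemma exists_ratio_sequence (b K : nat) : 2 <= b ->
  exists (X : nat -> nat) (s : nat -> nat -> nat), (forall i, 1 <= X i) /\
  forall i j, i < j <= K -> exists d, 1 <= d /\
    X i = d * (b * (b - 1) * s i j + b) /\ X j = d * (b * (b - 1) * s i j + b - 1).
Proof.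
  intros Hb. destruct (exists_ratio_sequence_Z (Z.of_nat b) K ltac:(lia)) as [Xz [HX1 HX]].
  destruct (choice (fun (ij : nat * nat) s => fst ij < snd ij <= K -> exists d, 1 <= d /\
      Z.to_nat (Xz (fst ij)) = d * (b * (b - 1) * s + b) /\
      Z.to_nat (Xz (snd ij)) = d * (b * (b - 1) * s + b - 1))) as [s Hs].
  { intros [i j]. destruct (Nat.lt_ge_cases i j); [destruct (Nat.le_gt_cases j K)|].
    2,3: exists 0; simpl; lia.
    destruct (HX i j ltac:(lia)) as [d [w [Hd [Hw [Hi Hj]]]]].
    exists (Z.to_nat w). intros _. exists (Z.to_nat d). simpl. rewrite Hi, Hj. nia. }
  exists (fun i => Z.to_nat (Xz i)), (fun i j => s (i, j)). split.
  - intros i. specialize (HX1 i). lia.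
  - intros i j Hij. exact (Hs (i, j) Hij).
Qed.

Lemma pigeonhole_below (M : nat) (h : nat -> nat) : (forall i, i <= M -> h i < M) ->
  exists i j, i < j <= M /\ h i = h j.
Proof.
  revert h. induction M as [|M IH]; intros h Hh.
  - specialize (Hh 0 (le_n 0)). lia.
  - destruct (Classical_Prop.classic (exists i, i <= M /\ h i = h (S M))) as [[i [Hi Heq]]|Hnew].
    + exists i, (S M). split; [lia|exact Heq].
    + (* Squeeze out the value [h (S M)], which no [h i] with [i <= M] takes. *)
      set (v := h (S M)).
      assert (Hv : forall i, i <= M -> h i <> v) by (intros i Hi E; apply Hnew; eauto).
      destruct (IH (fun i => if h i <? v then h i else h i - 1)) as [i [j [Hij Heq]]].
      { intros i Hi. pose proof (Hh i ltac:(lia)). pose proof (Hh (S M) (le_n _)).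
        pose proof (Hv i Hi). destruct (Nat.ltb_spec (h i) v); unfold v in *; lia. }
      exists i, j. split; [lia|].
      pose proof (Hv i ltac:(lia)). pose proof (Hv j ltac:(lia)).
      destruct (Nat.ltb_spec (h i) v), (Nat.ltb_spec (h j) v); lia.
Qed.

Fixpoint base_value (E : nat) (e : nat -> nat) (n : nat) : nat :=
  match n with
  | O => O
  | S n' => e O + E * base_value E (fun j => e (S j)) n'
  end.

Lemma base_value_lt E n e : (forall j, j < n -> e j < E) -> base_value E e n < E ^ n.
Proof.
  revert e. induction n as [|n IH]; intros e He; simpl; [lia|].
  specialize (IH (fun j => e (S j)) ltac:(intros j Hj; apply He; lia)).
  pose proof (He 0 ltac:(lia)). nia.
Qed.

Lemma base_value_inj E n e e' : (forall j, j < n -> e j < E) -> (forall j, j < n -> e' j < E) ->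
  base_value E e n = base_value E e' n -> forall j, j < n -> e j = e' j.
Proof.
  revert e e'. induction n as [|n IH]; intros e e' He He' Heq j Hj; simpl in *; [lia|].
  pose proof (He 0 ltac:(lia)). pose proof (He' 0 ltac:(lia)).
  assert (Hhigh : base_value E (fun j => e (S j)) n = base_value E (fun j => e' (S j)) n).
  { destruct (Nat.lt_trichotomy (base_value E (fun j => e (S j)) n)
                                (base_value E (fun j => e' (S j)) n)) as [|[|]];
      [nia|assumption|nia]. }
  destruct j as [|j]; [lia|].
  apply (IH (fun j => e (S j)) (fun j => e' (S j)));
    [intros k Hk; apply He; lia | intros k Hk; apply He'; lia | exact Hhigh | lia].
Qed.

Lemma pigeonhole_digit_vectors (E n : nat) (dig : nat -> nat -> nat) :
  (forall i j, j < n -> dig i j < E) ->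
  exists i i', i < i' <= E ^ n /\ forall j, j < n -> dig i j = dig i' j.
Proof.
  intros Hdig.
  destruct (pigeonhole_below (E ^ n) (fun i => base_value E (dig i) n)) as [i [i' [Hii Heq]]].
  { intros i _. apply base_value_lt, Hdig. }
  exists i, i'. split; [exact Hii|]. exact (base_value_inj E n _ _ (Hdig i) (Hdig i') Heq).
Qed.

Open Scope R_scope.

(* [up] rounds strictly upwards: [cell dl x = k] iff [(k - 1) dl <= x + 1 < k dl]. *)
Definition cell (dl x : R) : nat := Z.to_nat (up ((x + 1) / dl)).

Lemma cell_lt dl x : 0 < dl -> -1 <= x <= 1 -> (cell dl x < Z.to_nat (up (2 / dl + 1)))%nat.
Proof.
  intros Hdl Hx. unfold cell.
  destruct (archimed ((x + 1) / dl)) as [A1 A2].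
  destruct (archimed (2 / dl + 1)) as [B1 B2].
  assert (0 <= (x + 1) / dl) by (apply Rdiv_le_0_compat; lra).
  assert ((x + 1) / dl <= 2 / dl)
    by (apply Rmult_le_compat_r; [left; apply Rinv_0_lt_compat|]; lra).
  assert (H1 : (0 < up ((x + 1) / dl))%Z) by (apply lt_IZR; simpl; lra).
  assert (H2 : (up ((x + 1) / dl) < up (2 / dl + 1))%Z) by (apply lt_IZR; lra).
  lia.
Qed.

Lemma cell_eq_close dl x y : 0 < dl -> -1 <= x -> -1 <= y -> cell dl x = cell dl y ->
  Rabs (x - y) < dl.
Proof.
  intros Hdl Hx Hy Heq. unfold cell in Heq.
  destruct (archimed ((x + 1) / dl)) as [A1 A2].
  destruct (archimed ((y + 1) / dl)) as [B1 B2].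
  assert (0 <= (x + 1) / dl) by (apply Rdiv_le_0_compat; lra).
  assert (0 <= (y + 1) / dl) by (apply Rdiv_le_0_compat; lra).
  assert (H1 : (0 < up ((x + 1) / dl))%Z) by (apply lt_IZR; simpl; lra).
  assert (H2 : (0 < up ((y + 1) / dl))%Z) by (apply lt_IZR; simpl; lra).
  assert (Hu : up ((x + 1) / dl) = up ((y + 1) / dl)) by lia.
  rewrite Hu in A1, A2.
  assert (Hdiff : Rabs ((x + 1) / dl - (y + 1) / dl) < 1) by (apply Rabs_def1; lra).
  replace (x - y) with (((x + 1) / dl - (y + 1) / dl) * dl) by (field; lra).
  rewrite Rabs_mult, (Rabs_pos_eq dl) by lra. nra.
Qed.

Lemma Cmod_le1_components (z : C) : Cmod z <= 1 -> -1 <= fst z <= 1 /\ -1 <= snd z <= 1.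
Proof.
  intros Hz. pose proof (Rmax_Cmod z).
  pose proof (Rmax_l (Rabs (fst z)) (Rabs (snd z))).
  pose proof (Rmax_r (Rabs (fst z)) (Rabs (snd z))).
  split; apply Rabs_le_between; lra.
Qed.

(* Quantise the [2 r] real and imaginary parts to cells of width [eps / 2]; two vectors
   sharing all cells are within [sqrt 2 * eps / 2 < eps] in every coordinate. *)
Lemma exists_close_pair (r : nat) (eps : R) : 0 < eps -> exists K : nat,
  forall V : nat -> nat -> C, (forall i j, (j < r)%nat -> Cmod (V i j) <= 1) ->
  exists i i', (i < i' <= K)%nat /\ forall j, (j < r)%nat -> Cmod (Cminus (V i j) (V i' j)) < eps.
Proof.
  intros Heps. set (dl := eps / 2). set (E := Z.to_nat (up (2 / dl + 1))).
  exists (E ^ (r + r))%nat. intros V HV.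
  set (dig := fun i j =>
    if (j <? r)%nat then cell dl (fst (V i j)) else cell dl (snd (V i (j - r)%nat))).
  destruct (pigeonhole_digit_vectors E (r + r) dig) as [i [i' [Hii Heq]]].
  { intros i j Hj. unfold dig. destruct (Nat.ltb_spec j r);
      apply cell_lt; try (unfold dl; lra); apply Cmod_le1_components, HV; lia. }
  exists i, i'. split; [exact Hii|]. intros j Hj.
  pose proof (Cmod_le1_components _ (HV i j Hj)). pose proof (Cmod_le1_components _ (HV i' j Hj)).
  assert (Hre := Heq j ltac:(lia)). assert (Him := Heq (j + r)%nat ltac:(lia)).
  unfold dig in Hre, Him.
  replace (j <? r)%nat with true in Hre by (symmetry; apply Nat.ltb_lt; lia).
  replace (j + r <? r)%nat with false in Him by (symmetry; apply Nat.ltb_ge; lia).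
  replace (j + r - r)%nat with j in Him by lia.
  apply cell_eq_close in Hre, Him; try (unfold dl; lra).
  eapply Rle_lt_trans; [apply Cmod_2Rmax|]. simpl.
  assert (Rmax (Rabs (fst (V i j) + - fst (V i' j))) (Rabs (snd (V i j) + - snd (V i' j))) < dl)
    by (apply Rmax_lub_lt; assumption).
  assert (sqrt 2 < 2) by (rewrite <- sqrt_Rsqr by lra; apply sqrt_lt_1; unfold Rsqr; lra).
  pose proof (sqrt_pos 2). unfold dl in *. nra.
Qed.

Lemma indic_in P n : P n -> indic P n = 1.
Proof. intros H. unfold indic. destruct (excluded_middle_informative (P n)); tauto. Qed.

Lemma indic_notin P n : ~ P n -> indic P n = 0.
Proof. intros H. unfold indic. destruct (excluded_middle_informative (P n)); tauto. Qed.

Lemma indic_bounds P n : 0 <= indic P n <= 1.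
Proof. unfold indic. destruct (excluded_middle_informative (P n)); lra. Qed.

Lemma indic_le (P Q : nat -> Prop) n : (P n -> Q n) -> indic P n <= indic Q n.
Proof.
  intros H. unfold indic.
  destruct (excluded_middle_informative (P n)), (excluded_middle_informative (Q n)); tauto || lra.
Qed.

Lemma indic_or_le (P Q : nat -> Prop) n : indic (fun m => P m \/ Q m) n <= indic P n + indic Q n.
Proof.
  unfold indic. destruct (excluded_middle_informative (P n \/ Q n)),
    (excluded_middle_informative (P n)), (excluded_middle_informative (Q n)); tauto || lra.
Qed.

Lemma count_upto_nonneg P N : 0 <= count_upto P N.
Proof. induction N; simpl; [lra|]. pose proof (indic_bounds P (S N)); lra. Qed.

Lemma count_upto_le_mono P N M : (N <= M)%nat -> count_upto P N <= count_upto P M.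
Proof. induction 1; simpl; [lra|]. pose proof (indic_bounds P (S m)); lra. Qed.

Lemma count_upto_le (P Q : nat -> Prop) N : (forall n, (1 <= n)%nat -> P n -> Q n) ->
  count_upto P N <= count_upto Q N.
Proof.
  intros H. induction N; simpl; [lra|].
  pose proof (indic_le P Q (S N) (H (S N) ltac:(lia))). lra.
Qed.

Lemma count_upto_full P N : (forall n, (1 <= n)%nat -> P n) -> count_upto P N = INR N.
Proof.
  intros H. induction N; simpl count_upto; [reflexivity|].
  rewrite IHN, indic_in, S_INR by (apply H; lia). reflexivity.
Qed.

Lemma count_upto_empty P N : (forall n, ~ P n) -> count_upto P N = 0.
Proof.
  intros H. induction N; simpl count_upto; [reflexivity|]. rewrite IHN, indic_notin by apply H. lra.
Qed.

Lemma count_upto_or_le (P Q : nat -> Prop) N :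
  count_upto (fun n => P n \/ Q n) N <= count_upto P N + count_upto Q N.
Proof. induction N; simpl; [lra|]. pose proof (indic_or_le P Q (S N)). lra. Qed.

Lemma count_upto_exists_le (I : Type) (A : I -> nat -> Prop) (l : list I) (M : R) N :
  (forall p, In p l -> count_upto (A p) N <= M) ->
  count_upto (fun n => exists p, In p l /\ A p n) N <= INR (length l) * M.
Proof.
  induction l as [|p l IH]; intros HM.
  - simpl. replace (0 * M) with (count_upto (fun _ => False) N).
    + apply count_upto_le. intros n _ [q [[] _]].
    + rewrite Rmult_0_l. apply count_upto_empty. tauto.
  - eapply Rle_trans.
    { apply (count_upto_le _ (fun n => A p n \/ exists q, In q l /\ A q n)).
      intros n _ [q [[<-|Hq] HA]]; [left; exact HA|right; eauto]. }
    eapply Rle_trans; [apply count_upto_or_le|].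
    pose proof (HM p (or_introl eq_refl)). pose proof (IH (fun q Hq => HM q (or_intror Hq))).
    rewrite length_cons, S_INR. lra.
Qed.

Lemma count_upto_image (A Q : nat -> Prop) (g : nat -> nat) :
  (forall k, (g k < g (S k))%nat) -> (forall k, (1 <= k)%nat -> A k -> Q (g k)) ->
  forall N, count_upto A N <= count_upto Q (g N).
Proof.
  intros Hg HAQ N. induction N as [|N IH]; [apply count_upto_nonneg|]. simpl count_upto.
  pose proof (Hg N). destruct (Classical_Prop.classic (A (S N))) as [HA|HA].
  - destruct (g (S N)) as [|m] eqn:E; [lia|]. simpl count_upto.
    rewrite !indic_in by (try rewrite <- E; auto with arith).
    pose proof (count_upto_le_mono Q (g N) m ltac:(lia)). lra.
  - rewrite indic_notin by exact HA.
    pose proof (count_upto_le_mono Q (g N) (g (S N)) ltac:(lia)). lra.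
Qed.

Lemma exists_argmax_in (I : Type) (f : I -> R) (l : list I) : l <> nil ->
  exists p, In p l /\ forall q, In q l -> f q <= f p.
Proof.
  induction l as [|p l IH]; intros Hl; [congruence|].
  destruct l as [|p' l'].
  - exists p. split; [left; reflexivity|]. intros q [<-|[]]. lra.
  - destruct (IH ltac:(discriminate)) as [m [Hm Hmax]].
    destruct (Rle_lt_dec (f p) (f m)).
    + exists m. split; [right; exact Hm|]. intros q [<-|Hq]; [lra|auto].
    + exists p. split; [left; reflexivity|]. intros q [<-|Hq]; [lra|]. pose proof (Hmax q Hq). lra.
Qed.

(* For [N >= B], the block [[1, B X]] with [X = N / B] fills at least half of [[1, N]]. *)
Lemma lower_density_pos_of_linear_bound (Q : nat -> Prop) (B : nat) (c : R) :
  0 < c -> (1 <= B)%nat -> (forall X, (1 <= X)%nat -> c * INR X <= count_upto Q (B * X)) ->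
  Rbar_lt 0 (lower_density Q).
Proof.
  intros Hc HB Hbound.
  assert (Hev : eventually (fun N => c / (2 * INR B) <= count_upto Q N / INR N)).
  { exists B. intros N HN. set (X := (N / B)%nat).
    assert (HX : (1 <= X)%nat) by (apply Nat.div_le_lower_bound; lia).
    assert (Hle : (B * X <= N)%nat) by apply Nat.Div0.mul_div_le.
    assert (Hlt : (N < B * (X + 1))%nat).
    { pose proof (Nat.div_mod N B ltac:(lia)). pose proof (Nat.mod_upper_bound N B ltac:(lia)).
      lia. }
    pose proof (Hbound X HX). pose proof (count_upto_le_mono Q _ _ Hle).
    apply lt_INR in Hlt. apply le_INR in HX.
    rewrite mult_INR, plus_INR in Hlt. simpl INR in HX, Hlt.
    assert (HBr : 1 <= INR B) by (apply (le_INR 1); lia).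
    assert (HNpos : 0 < INR N) by (apply lt_0_INR; lia).
    apply (Rle_div_r _ _ _ HNpos).
    apply Rle_trans with (c * INR X); [|lra].
    replace (c / (2 * INR B) * INR N) with (c * (INR N / (2 * INR B))) by (field; lra).
    apply Rmult_le_compat_l; [lra|].
    apply (Rle_div_l _ _ (2 * INR B) ltac:(lra)).
    assert (INR B <= INR B * INR X) by nra. lra. }
  apply LimInf_le in Hev. rewrite LimInf_seq_const in Hev. unfold lower_density.
  assert (0 < c / (2 * INR B))
    by (apply Rdiv_lt_0_compat; [|apply Rmult_lt_0_compat, lt_0_INR]; lia || lra).
  destruct (LimInf_seq _); simpl in *; lra || auto.
Qed.

(* Every [k] is covered by one of the progressions [alpha p * k + beta p]; the one that
   covers most [k <= X] covers at least [X / |idx|] of them, and its terms stay below [B X]. *)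
Lemma lower_density_pos_of_progressions (I : Type) (idx : list I) (alpha beta : I -> nat)
  (Q : nat -> Prop) :
  (forall p, In p idx -> (1 <= alpha p)%nat) ->
  (forall k, (1 <= k)%nat -> exists p, In p idx /\ Q (alpha p * k + beta p)%nat) ->
  Rbar_lt 0 (lower_density Q).
Proof.
  intros Halpha Hcover.
  set (A := fun p k => Q (alpha p * k + beta p)%nat).
  set (B := list_max (map (fun p => alpha p + beta p)%nat idx)).
  assert (HB : forall p, In p idx -> (alpha p + beta p <= B)%nat).
  { intros p Hp. assert (Hall := proj1 (list_max_le _ B) (le_n B)).
    rewrite Forall_forall in Hall. apply Hall, (in_map (fun q => alpha q + beta q)%nat), Hp. }
  destruct (Hcover 1%nat (le_n 1)) as [p1 [Hp1 _]].
  assert (Hidx : idx <> nil) by (intros ->; destruct Hp1).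
  assert (Hlen : 0 < INR (length idx)).
  { apply lt_0_INR. destruct idx; [congruence|simpl; lia]. }
  apply (lower_density_pos_of_linear_bound Q B (/ INR (length idx)));
    [apply Rinv_0_lt_compat, Hlen | pose proof (HB p1 Hp1); pose proof (Halpha p1 Hp1); lia|].
  intros X HX.
  destruct (exists_argmax_in I (fun p => count_upto (A p) X) idx Hidx) as [p [Hp Hmax]].
  assert (Hunion : INR X <= INR (length idx) * count_upto (A p) X).
  { rewrite <- (count_upto_full (fun k => exists q, In q idx /\ A q k) X Hcover).
    apply count_upto_exists_le, Hmax. }
  assert (Himage : count_upto (A p) X <= count_upto Q (B * X)).
  { eapply Rle_trans.
    - apply (count_upto_image (A p) Q (fun k => alpha p * k + beta p)%nat); [|unfold A; tauto].
      intros k. pose proof (Halpha p Hp). nia.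
    - apply count_upto_le_mono. pose proof (HB p Hp). nia. }
  apply (Rmult_le_reg_l (INR (length idx))); [exact Hlen|].
  rewrite <- Rmult_assoc, Rinv_r, Rmult_1_l by lra.
  eapply Rle_trans; [exact Hunion|]. apply Rmult_le_compat_l; [lra|exact Himage].
Qed.

Lemma Cmult_Cconj_unimodular (z : C) : Cmod z = 1 -> Cmult z (Cconj z) = RtoC 1.
Proof. intros H. rewrite <- Cmod2_conj, H. unfold RtoC. f_equal; simpl; ring. Qed.

Lemma Cmod_twist (x y u v w : C) : Cmod u = 1 -> Cmod v = 1 -> Cmod w = 1 ->
  Cmod (Cminus (Cmult (Cmult w x) (Cconj v)) (Cmult (Cmult w y) (Cconj u))) =
  Cmod (Cminus (Cmult x u) (Cmult y v)).
Proof.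
  intros Hu Hv Hw.
  replace (Cminus (Cmult (Cmult w x) (Cconj v)) (Cmult (Cmult w y) (Cconj u))) with
    (Cmult (Cmult w (Cmult (Cconj u) (Cconj v))) (Cminus (Cmult x u) (Cmult y v))).
  2:{ transitivity (Cminus (Cmult w (Cmult x (Cmult (Cconj v) (Cmult u (Cconj u)))))
                           (Cmult w (Cmult y (Cmult (Cconj u) (Cmult v (Cconj v)))))); [ring|].
      rewrite !Cmult_Cconj_unimodular by assumption. ring. }
  rewrite !Cmod_mult, !Cmod_conj, Hu, Hv, Hw. ring.
Qed.

Open Scope nat_scope.

Lemma progression_factorization (a b s d k X Y : nat) : 1 <= b ->
  X = d * (a * s + b) -> Y = d * (a * s + b - 1) ->
  a * ((a * s + b) * Y * k + s) + b = (a * s + b) * (a * k * Y + 1) /\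
  a * ((a * s + b) * Y * k + s) + b - 1 = (a * s + b - 1) * (a * k * X + 1).
Proof.
  intros Hb -> ->.
  assert (E : a * ((a * s + b) * (d * (a * s + b - 1)) * k + s) + b
              = (a * s + b) * (a * k * (d * (a * s + b - 1)) + 1)) by nia.
  split; [exact E|]. rewrite E.
  destruct (a * s + b) as [|q] eqn:HP; [lia|]. rewrite Nat.sub_succ, Nat.sub_0_r. nia.
Qed.

Open Scope R_scope.

Lemma Cmod_difference_on_progression (F : nat -> C) (a b s d k X Y : nat) :
  completely_multiplicative F -> unit_circle_valued F -> (1 <= d)%nat -> (2 <= b)%nat ->
  X = (d * (a * s + b))%nat -> Y = (d * (a * s + b - 1))%nat ->
  Cmod (Cminus (F (a * ((a * s + b) * Y * k + s) + b)%nat)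
               (F (a * ((a * s + b) * Y * k + s) + b - 1)%nat)) =
  Cmod (Cminus (Cmult (F X) (Cconj (F (a * k * X + 1)%nat)))
               (Cmult (F Y) (Cconj (F (a * k * Y + 1)%nat)))).
Proof.
  intros Hmul Hunit Hd Hb HX HY.
  destruct (progression_factorization a b s d k X Y ltac:(lia) HX HY) as [E1 E2].
  rewrite E2, E1, (Hmul (a * s + b)%nat), (Hmul (a * s + b - 1)%nat) by nia.
  set (u := F (a * k * Y + 1)%nat). set (v := F (a * k * X + 1)%nat).
  rewrite HX, HY, !(Hmul d) by nia.
  symmetry. apply Cmod_twist; apply Hunit; nia.
Qed.

Theorem proposition5p1 (r a b : nat) :
  (1 <= r)%nat -> (2 <= b)%nat -> a = (b * (b - 1))%nat ->
  forall (eps : R), 0 < eps ->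
  forall f : nat -> nat -> C,
    (forall j, (j < r)%nat -> completely_multiplicative (f j) /\ unit_circle_valued (f j)) ->
    Rbar_lt (Finite 0)
      (lower_density (fun n : nat => (1 <= n)%nat /\
         forall j, (j < r)%nat ->
           Cmod (Cminus (f j (a * n + b)%nat) (f j (a * n + b - 1)%nat)) < eps)).
Proof.
  intros _ Hb Ha eps Heps f Hf.
  destruct (exists_close_pair r eps Heps) as [K HK].
  destruct (exists_ratio_sequence b K Hb) as [X [s [HX1 Hpair]]].
  rewrite <- Ha in Hpair.
  apply (lower_density_pos_of_progressions (nat * nat) (list_prod (seq 0 (S K)) (seq 0 (S K)))
           (fun ij => ((a * s (fst ij) (snd ij) + b) * X (snd ij))%nat)
           (fun ij => s (fst ij) (snd ij))).
  { intros [i j] _. pose proof (HX1 j). simpl. nia. }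
  intros k Hk.
  destruct (HK (fun i j => Cmult (f j (X i)) (Cconj (f j (a * k * X i + 1)%nat))))
    as [i [i' [Hii Hclose]]].
  { intros i j Hj. destruct (Hf j Hj) as [_ Hunit].
    rewrite Cmod_mult, Cmod_conj, !Hunit; [lra|nia|apply HX1]. }
  exists (i, i'). split; [apply in_prod_iff; split; apply in_seq; lia|]. simpl.
  split; [pose proof (HX1 i'); nia|]. intros j Hj.
  destruct (Hf j Hj) as [Hmul Hunit]. destruct (Hpair i i' Hii) as [d [Hd [HXi HXi']]].
  rewrite (Cmod_difference_on_progression (f j) a b (s i i') d k (X i) (X i')
             Hmul Hunit Hd Hb HXi HXi').
  exact (Hclose j Hj).
Qed.
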